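(* Under the hypotheses below, if $|r_i|=|r_j|$ then $|\sigma_a(r_i)|=|\sigma_a(r_j)|$ for every nonzero $a\in\mathcal M$.
   Context: $\mathcal M$ denotes the $\mathbb Q$-vector space $\mathbb Q^{<\omega}$ of all sequences of rationals with only finitely many nonzero terms, with zero vector $\vec 0$; a relation is definable if it is first-order definable without parameters in $\langle\mathcal M;+\rangle$. Let $n\ge1$, let $r_1,\dots,r_n$ be pairwise distinct rationals with $r_i\notin\{0,1\}$, and let $R$ be a definable binary relation such that for all $x\ne\vec 0$ and all $y$: $R(x,y)\iff y\in\{r_1x,\dots,r_nx\}$. Let $\varphi$ be a permutation of $\mathcal M$ preserving $R$ (i.e. $R(a,b)\iff R(\varphi(a),\varphi(b))$). Then $\varphi(\vec 0)=\vec 0$ and for every nonzero $a$ there is a unique permutation $\sigma_a$ of $\{r_1,\dots,r_n\}$ with $\varphi(r_ia)=\sigma_a(r_i)\varphi(a)$ for all $i$; this is the $\sigma_a$ in the claim. *)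

From HB Require Import structures.
From mathcomp Require Import all_boot all_order all_algebra all_fingroup.
Set Implicit Arguments. Unset Strict Implicit. Unset Printing Implicit Defensive.
Import Order.TTheory GRing.Theory Num.Theory.
Local Open Scope ring_scope.

(* The Q-vector space M = Q^{<omega}: rational sequences with finite support. *)
Definition fin_supp (f : nat -> rat) : Prop :=
  exists N : nat, forall k : nat, (N <= k)%N -> f k = 0.

Definition M : Type := {f : nat -> rat | fin_supp f}.

Definition Mval (x : M) : nat -> rat := proj1_sig x.

Lemma fin_supp0 : fin_supp (fun _ => 0).
Proof. by exists 0%N. Qed.

Lemma fin_suppD (f g : nat -> rat) :
  fin_supp f -> fin_supp g -> fin_supp (fun k => f k + g k).
Proof.
move=> [N1 H1] [N2 H2]; exists (maxn N1 N2) => k Hk.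
rewrite H1 ?H2 ?addr0 //.
- by apply: leq_trans Hk; rewrite leq_maxr.
- by apply: leq_trans Hk; rewrite leq_maxl.
Qed.

Lemma fin_suppZ (q : rat) (f : nat -> rat) :
  fin_supp f -> fin_supp (fun k => q * f k).
Proof. by move=> [N H]; exists N => k Hk; rewrite H ?mulr0. Qed.

Definition zeroM : M := exist _ (fun _ => 0) fin_supp0.
Definition addM (x y : M) : M :=
  exist _ (fun k => Mval x k + Mval y k) (fin_suppD (proj2_sig x) (proj2_sig y)).
Definition scaleM (q : rat) (x : M) : M :=
  exist _ (fun k => q * Mval x k) (fin_suppZ q (proj2_sig x)).

Inductive term : Type :=
| TVar of nat
| TAdd of term & term.

Inductive formula : Type :=
| FEq of term & term
| FNot of formula
| FAnd of formula & formula
| FOr of formula & formula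
| FEx of nat & formula
| FAll of nat & formula.

Definition upd (e : nat -> M) (k : nat) (m : M) : nat -> M :=
  fun j => if j == k then m else e j.

Fixpoint teval (e : nat -> M) (t : term) : M :=
  match t with
  | TVar k => e k
  | TAdd t1 t2 => addM (teval e t1) (teval e t2)
  end.

Fixpoint sat (e : nat -> M) (f : formula) : Prop :=
  match f with
  | FEq t1 t2 => teval e t1 = teval e t2
  | FNot g => ~ sat e g
  | FAnd g h => sat e g /\ sat e h
  | FOr g h => sat e g \/ sat e h
  | FEx k g => exists m : M, sat (upd e k m) g
  | FAll k g => forall m : M, sat (upd e k m) g
  end.

Definition definable2 (R : M -> M -> Prop) : Prop :=
  exists f : formula, forall (e : nat -> M) (x y : M),
    sat (upd (upd e 0%N x) 1%N y) f <-> R x y.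

From HB Require Import structures.
From mathcomp Require Import all_boot all_order all_algebra all_fingroup.
From mathcomp Require Import ring lra zify.
From Stdlib Require Import ProofIrrelevance FunctionalExtensionality ClassicalEpsilon Classical.
Set Implicit Arguments. Unset Strict Implicit. Unset Printing Implicit Defensive.
Import Order.TTheory GRing.Theory Num.Theory.
Local Open Scope ring_scope.

(* Count the words over 'I_n that multiply x into y by the factors r_k.  If
   r_j = - r_i, swapping the letters i and j matches the words starting from r_i
   with those starting from r_j, except for the (n - 2)^m words of length m
   avoiding both.  The coefficient psi(x) of phi (x a) on phi a, defined where
   phi (x a) lies on the line of phi a, preserves these counts and sends r_k to
   r_(s k), so the counts from r_(s i) and from r_(s j) dominate each other up to
   (n - 2)^m.  Such a domination of x1 by x2 forces |x1| <= |x2|: otherwise,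
   shifting endpoints by x1 / x2 bounds each count by O(m (n - 2)^m), while the
   n^m words have only polynomially many endpoints. *)

Lemma M_ext (x y : M) : Mval x =1 Mval y -> x = y.
Proof.
move=> H; apply: eq_sig_hprop; first by move=> ? ? ?; apply: proof_irrelevance.
exact: functional_extensionality.
Qed.

Lemma scaleMA q q' x : scaleM q (scaleM q' x) = scaleM (q * q') x.
Proof. by apply: M_ext => k /=; rewrite mulrA. Qed.

Lemma scale1M x : scaleM 1 x = x.
Proof. by apply: M_ext => k /=; rewrite mul1r. Qed.

Lemma scale0M x : scaleM 0 x = zeroM.
Proof. by apply: M_ext => k /=; rewrite mul0r. Qed.

Lemma scaleM0 q : scaleM q zeroM = zeroM.
Proof. by apply: M_ext => k /=; rewrite mulr0. Qed.

Lemma M_coord_neq0 x : x <> zeroM -> exists k, Mval x k != 0.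
Proof.
move=> hx; apply: NNPP => hn; apply: hx; apply: M_ext => k /=.
by apply: NNPP => hk; apply: hn; exists k; apply/eqP.
Qed.

Lemma scaleMIr x : x <> zeroM -> injective (scaleM^~ x).
Proof.
move=> /M_coord_neq0 [k hk] q q' /(congr1 (fun z => Mval z k)) /= /eqP.
by rewrite -subr_eq0 -mulrBl mulf_eq0 subr_eq0 (negPf hk) orbF => /eqP.
Qed.

Lemma scaleM_neq0 q x : q != 0 -> x <> zeroM -> scaleM q x <> zeroM.
Proof.
move=> hq hx; rewrite -(scale0M x) => /(scaleMIr hx) /eqP.
by rewrite (negPf hq).
Qed.

Fixpoint nwalks n (r : 'I_n -> rat) (P : pred 'I_n) (m : nat) (x y : rat) : nat :=
  if m is m'.+1 then (\sum_(k < n | P k) nwalks r P m' (r k * x) y)%N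
  else (x == y : nat).

Section Walks.
Variables (n : nat) (r : 'I_n -> rat).

Lemma nwalksS_gt0 P m x y : (0 < nwalks r P m.+1 x y)%N ->
  exists2 k, P k & (0 < nwalks r P m (r k * x) y)%N.
Proof.
rewrite lt0n /= sum_nat_eq0 => /forall_inPn [k Pk hk].
by exists k; rewrite // lt0n.
Qed.

Lemma nwalks_le_card P m x y : (nwalks r P m x y <= #|P| ^ m)%N.
Proof.
elim: m x => [|m IH] x /=; first by case: (x == y).
by rewrite expnS -sum_nat_const; apply: leq_sum => k _; apply: IH.
Qed.

Lemma nwalksZ P m c x y :
  c != 0 -> nwalks r P m (c * x) (c * y) = nwalks r P m x y.
Proof.
move=> hc; elim: m x => [|m IH] x /=; first by rewrite (inj_eq (mulfI hc)).
by apply: eq_bigr => k _; rewrite mulrCA IH.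
Qed.

Lemma nwalks_gt0_monomial P m x y : (0 < nwalks r P m x y)%N ->
  exists2 e : 'I_n -> nat, (forall k, e k <= m)%N & y = x * \prod_(k < n) r k ^+ e k.
Proof.
elim: m x => [|m IH] x.
  rewrite /= lt0n eqb0 negbK => /eqP <-; exists (fun _ => 0%N) => //.
  by rewrite big1 ?mulr1.
case/nwalksS_gt0 => k _ /IH [e he ->].
exists (fun l => e l + (l == k))%N => [l|].
  by rewrite -addn1 leq_add //; case: (l == k).
rewrite (bigD1 k) //= [in RHS](bigD1 k) //= eqxx addn1 exprS.
rewrite [in RHS](eq_bigr (fun l => r l ^+ e l)); last by move=> l /negPf ->; rewrite addn0.
by rewrite -!mulrA; apply: mulrCA.
Qed.

Lemma nwalks_gt0_norm P (mu Mx : rat) m x y : 0 <= mu ->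
  (forall k, mu <= `|r k| <= Mx) -> (0 < nwalks r P m x y)%N ->
  mu ^+ m * `|x| <= `|y| <= Mx ^+ m * `|x|.
Proof.
move=> mu_ge0 r_bd; elim: m x => [|m IH] x.
  by rewrite /= lt0n eqb0 negbK => /eqP ->; rewrite !mul1r lexx.
case/nwalksS_gt0 => k _ /IH; rewrite normrM !exprSr -!mulrA => /andP [lo hi].
have /andP [mu_le le_Mx] := r_bd k.
have Mx_ge0 : 0 <= Mx by apply: le_trans le_Mx; apply: le_trans mu_le.
apply/andP; split.
  by apply: le_trans lo; rewrite ler_wpM2l ?exprn_ge0 // ler_wpM2r.
by apply: le_trans hi _; rewrite ler_wpM2l ?exprn_ge0 // ler_wpM2r.
Qed.

Lemma nwalks_mass m x (V : seq rat) : uniq V ->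
  (forall y, (0 < nwalks r predT m x y)%N -> y \in V) ->
  (\sum_(y <- V) nwalks r predT m x y = n ^ m)%N.
Proof.
elim: m x V => [|m IH] x V V_uniq V_supp /=.
  have xV : x \in V by apply: V_supp; rewrite /= eqxx.
  rewrite expn0; have <- : count_mem x V = 1%N by rewrite count_uniq_mem // xV.
  rewrite -sum1_count [RHS]big_mkcond /=.
  by apply: eq_bigr => y _; rewrite eq_sym; case: (y == x).
rewrite exchange_big /= expnS mulnC -iter_addn_0 -big_const_ord.
apply: eq_bigr => k _; apply: IH => // y hy; apply: V_supp.
by apply: leq_trans hy _; rewrite /= (bigD1 k) //= leq_addr.
Qed.

Lemma nwalks_total m : exists2 V : seq rat,
  (size V <= m.+1 ^ n)%N & (\sum_(y <- V) nwalks r predT m 1 y = n ^ m)%N.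
Proof.
pose monomial (e : {ffun 'I_n -> 'I_m.+1}) := \prod_(k < n) r k ^+ e k.
exists (undup (map monomial (enum {ffun 'I_n -> 'I_m.+1}))).
  apply: leq_trans (size_undup _) _.
  by rewrite size_map -cardE card_ffun !card_ord.
apply: nwalks_mass; first exact: undup_uniq.
move=> y /nwalks_gt0_monomial [e he ->]; rewrite mul1r mem_undup.
apply/mapP; exists [ffun k => inord (e k)]; first by rewrite mem_enum.
by apply: eq_bigr => k _; rewrite ffunE inordK // ltnS.
Qed.

Section Flip.
Variables (i j : 'I_n) (neq_ij : i != j) (r_opp : r j = - r i).

Let avoid_ij := [pred k | (k != i) && (k != j)].

Lemma nwalks_flip m x y : (nwalks r predT m x y <=
  nwalks r predT m (- x) y + nwalks r avoid_ij m x y)%N.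
Proof.
have split_ij (F : 'I_n -> nat) : (\sum_(k < n | predT k) F k =
    F i + F j + \sum_(k < n | avoid_ij k) F k)%N.
  rewrite (bigD1 i) //= (bigD1 j) 1?eq_sym //= addnA.
  by congr (_ + _ + _)%N; apply: eq_bigl => k; rewrite andbC.
elim: m x => [|m IH] x /=; first exact: leq_addl.
have avoid_le : (\sum_(k < n | avoid_ij k) nwalks r predT m (r k * x) y <=
    \sum_(k < n | avoid_ij k) nwalks r predT m (r k * - x) y +
    \sum_(k < n | avoid_ij k) nwalks r avoid_ij m (r k * x) y)%N.
  by rewrite -big_split; apply: leq_sum => k _; rewrite mulrN; apply: IH.
rewrite !split_ij r_opp !mulNr !mulrN opprK.
by rewrite [(nwalks _ _ _ (- _) _ + _)%N]addnC -!addnA !leq_add2l.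
Qed.

Lemma nwalks_opp_le m y :
  (nwalks r predT m (r i) y <= nwalks r predT m (r j) y + (n - 2) ^ m)%N.
Proof.
have card_avoid : #|avoid_ij| = (n - 2)%N.
  have card_pred2 := cardC (pred2 i j).
  rewrite card2 neq_ij card_ord in card_pred2.
  have -> : #|avoid_ij| = #|[predC pred2 i j]|.
    by apply: eq_card => k; rewrite !inE negb_or.
  by move: card_pred2; move: #|_| => c; lia.
apply: leq_trans (nwalks_flip m (r i) y) _.
by rewrite r_opp leq_add2l -card_avoid nwalks_le_card.
Qed.

End Flip.

Section Transport.
Variables (good : rat -> Prop) (f : rat -> rat).
Hypotheses (r_inj : injective r)
  (good_neq0 : forall x, good x -> x != 0)
  (good_mulr : forall k x, good x -> good (r k * x))
  (f_inj : forall x x', good x -> good x' -> f x = f x' -> x = x')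
  (f_mulr : forall k x, good x -> exists l, f (r k * x) = r l * f x)
  (f_mulr_surj : forall l x, good x -> exists k, f (r k * x) = r l * f x).

(* On good points, multiplication by r k corresponds under f to multiplication
   by r (pi k) for a permutation pi, which reindexes the sum defining nwalks. *)
Lemma nwalks_transport m x y : good x -> good y ->
  nwalks r predT m (f x) (f y) = nwalks r predT m x y.
Proof.
elim: m x => [|m IH] x gx gy /=.
  by congr (nat_of_bool _); apply/eqP/eqP => [/f_inj -> //|->].
pose pi k := odflt k [pick l | f (r k * x) == r l * f x].
have f_pi k : f (r k * x) = r (pi k) * f x.
  rewrite /pi; case: pickP => [l /eqP //|none].
  by have [l hl] := f_mulr k gx; move: (none l); rewrite hl eqxx.
have pi_inj : injective pi.
  move=> k1 k2 hk; apply: r_inj; apply: (mulIf (good_neq0 gx)).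
  by apply: f_inj; rewrite ?f_pi ?hk //; apply: good_mulr.
rewrite (reindex_inj pi_inj) /=; apply: eq_bigr => k _.
by rewrite -f_pi IH //; apply: good_mulr.
Qed.

Lemma nwalks_transport_image m x y' : good x ->
  (0 < nwalks r predT m (f x) y')%N -> exists2 y, good y & f y = y'.
Proof.
elim: m x => [|m IH] x gx.
  by rewrite /= lt0n eqb0 negbK => /eqP <-; exists x.
case/nwalksS_gt0 => l _; have [k <-] := f_mulr_surj l gx.
by apply: IH; apply: good_mulr.
Qed.

Lemma nwalks_transport_le (C : nat -> nat) x1 x2 : good x1 -> good x2 ->
  (forall m y, nwalks r predT m x1 y <= nwalks r predT m x2 y + C m)%N ->
  forall m y', (nwalks r predT m (f x1) y' <= nwalks r predT m (f x2) y' + C m)%N.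
Proof.
move=> g1 g2 dom m y'; case: (posnP (nwalks r predT m (f x1) y')) => [-> //|pos].
have [y gy <-] := nwalks_transport_image g1 pos.
by rewrite !nwalks_transport.
Qed.

End Transport.
End Walks.

Lemma iter_shift_le (f : rat -> nat) (rho : rat) (C : nat) :
  (forall z, f z <= f (z * rho)%R + C)%N ->
  forall K z, (f z <= f (z * rho ^+ K)%R + K * C)%N.
Proof.
move=> shift; elim=> [|K IH] z; first by rewrite mulr1 addn0.
have := shift z; have := IH (z * rho); rewrite exprS mulrA mulSn; lia.
Qed.

Lemma bernoulli_ineq (L : nat) (q : rat) : 1 <= q -> 1 + L%:R * (q - 1) <= q ^+ L.
Proof.
move=> q_ge1; elim: L => [|L IH]; first by rewrite mul0r addr0.
have q_ge0 : 0 <= q by lra.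
have qL_ge0 : 0 <= q ^+ L by apply: exprn_ge0.
have L_ge0 : 0 <= L%:R :> rat by [].
have := ler_wpM2l q_ge0 IH; rewrite -natr1 exprS.
have : 0 <= L%:R * (q - 1) * (q - 1) by apply: mulr_ge0; [apply: mulr_ge0|]; lra.
nra.
Qed.

Lemma pow_unbounded (q C : rat) : 1 < q -> exists L : nat, C < q ^+ L.
Proof.
move=> q_gt1; have := archi_boundP (normr_ge0 (C / (q - 1))).
set L := Num.Def.archi_bound _ => hL; exists L.
apply: lt_le_trans (bernoulli_ineq L (ltW q_gt1)).
have : C / (q - 1) < L%:R by apply: le_lt_trans hL; apply: ler_norm.
rewrite ltr_pdivrMr; lra.
Qed.

Lemma leq_expn2r e m1 m2 : (m1 <= m2 -> m1 ^ e <= m2 ^ e)%N.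
Proof. by move=> le_m; elim: e => // e IH; rewrite !expnS leq_mul. Qed.

Lemma exp2_gt_poly (Q d : nat) : exists2 k, (0 < k)%N & (Q * k ^ d < 2 ^ k)%N.
Proof.
have sq_le_exp2 j : (4 <= j -> j * j <= 2 ^ j)%N.
  elim: j => // j IH; rewrite leq_eqVlt => /orP [/eqP <- //|hj].
  by have := IH hj; rewrite expnS; nia.
set j := (d + Q + 4)%N.
have hj : (j * d + Q.+1 <= 2 ^ j)%N.
  by apply: leq_trans (sq_le_exp2 j _); rewrite /j; nia.
exists (2 ^ j)%N; first by rewrite expn_gt0.
rewrite -expnM mulnC; apply: leq_trans (leq_pexp2l (isT : (0 < 2)%N) hj).
rewrite expnD ltn_pmul2l ?expn_gt0 // expnS.
by have := ltn_expl Q (isT : (1 < 2)%N); lia.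
Qed.

Lemma exp_gt_poly_exp n B L : (B < n)%N ->
  exists2 m, (0 < m)%N & (m.+1 ^ n * (L * m * B ^ m) < n ^ m)%N.
Proof.
case: n => // c; rewrite ltnS; case: c => [|c1] B_le.
  by exists 1%N => //; move: B_le; rewrite leqn0 => /eqP ->; rewrite !muln0.
set c := c1.+1.
have grow t : (c ^ t * (c + t) <= c * c.+1 ^ t)%N.
  elim: t => [|t IH]; first by rewrite !expn0 mul1n muln1 addn0.
  rewrite !expnS; have : (c ^ t <= c.+1 ^ t)%N by apply: leq_expn2r.
  by nia.
have double k : (2 ^ k * c ^ (c * k) <= c.+1 ^ (c * k))%N.
  rewrite !expnM -expnMn; apply: leq_expn2r.
  have := grow c; rewrite (_ : (c + c = 2 * c)%N); last by lia.
  by rewrite mulnCA mulnA [(c * _)%N]mulnC leq_pmul2r.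
have [k k_gt0 hk] := exp2_gt_poly (L * c.+1 ^ c.+2) c.+2.
exists (c * k)%N; first by rewrite muln_gt0 k_gt0.
have hm1 : ((c * k).+1 ^ c.+1 <= c.+1 ^ c.+1 * k ^ c.+1)%N.
  by rewrite -expnMn; apply: leq_expn2r; nia.
have hm2 : (c * k <= c.+1 * k)%N by rewrite leq_mul2r leqnSn orbT.
have hm3 : (B ^ (c * k) <= c ^ (c * k))%N by apply: leq_expn2r.
apply: (@leq_ltn_trans (L * c.+1 ^ c.+2 * k ^ c.+2 * c ^ (c * k))).
  apply: leq_trans (leq_mul hm1 (leq_mul (leq_mul (leqnn L) hm2) hm3)) _.
  by rewrite [(c.+1 ^ c.+2)%N]expnS [(k ^ c.+2)%N]expnS; nia.
by apply: leq_trans (double k); rewrite ltn_pmul2r // expn_gt0.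
Qed.

Section Domination.
Variables (n : nat) (r : 'I_n -> rat) (r_neq0 : forall k, r k != 0).

Lemma norm_r_bounds : exists2 mu : rat, 0 < mu &
  exists2 Mx : rat, 0 <= Mx & forall k, mu <= `|r k| <= Mx.
Proof.
pose S := 1 + \sum_(k < n) `|r k|^-1.
have S_ge k : `|r k|^-1 <= S.
  rewrite /S (bigD1 k) //=.
  suff : 0 <= \sum_(l < n | l != k) `|r l|^-1 by lra.
  by apply: sumr_ge0 => l _; rewrite invr_ge0.
have S_gt0 : 0 < S by rewrite /S ltr_pwDl ?sumr_ge0 // => k _; rewrite invr_ge0.
exists S^-1; first by rewrite invr_gt0.
exists (\sum_(k < n) `|r k|) => [|k]; first exact: sumr_ge0.
apply/andP; split.
  by rewrite -[`|r k|]invrK lef_pV2 ?posrE ?invr_gt0 ?normr_gt0.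
rewrite (bigD1 k) //=.
suff : 0 <= \sum_(l < n | l != k) `|r l| by lra.
exact: sumr_ge0.
Qed.

Lemma nwalks_shift_vanish (mu Mx rho : rat) (L m : nat) z :
  0 < mu -> 0 <= Mx -> (forall k, mu <= `|r k| <= Mx) -> Mx / mu < `|rho| ^+ L ->
  (0 < m)%N -> (0 < nwalks r predT m 1 z)%N ->
  nwalks r predT m 1 (z * rho ^+ (L * m)) = 0%N.
Proof.
move=> mu_gt0 Mx_ge0 r_bd hL m_gt0.
move=> /(nwalks_gt0_norm (ltW mu_gt0) r_bd) /andP [z_ge _].
apply/eqP; rewrite -leqn0 leqNgt.
apply/negP => /(nwalks_gt0_norm (ltW mu_gt0) r_bd) /andP [_].
apply/negP; rewrite -ltNge normr1 mulr1; rewrite normr1 mulr1 in z_ge.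
have ltML : Mx ^+ m < (mu * `|rho| ^+ L) ^+ m.
  rewrite ltrXn2r -?lt0n // ?mulr_ge0 ?exprn_ge0 ?(ltW mu_gt0) //.
  by rewrite -ltr_pdivrMl // mulrC.
apply: lt_le_trans ltML _.
by rewrite normrM normrX exprM exprMn ler_wpM2r ?exprn_ge0.
Qed.

Lemma nwalks_shift_bounded (B : nat) (rho : rat) : (B < n)%N -> 1 < `|rho| ->
  ~ (forall m z, nwalks r predT m 1 z <= nwalks r predT m 1 (z * rho) + B ^ m)%N.
Proof.
move=> B_lt rho_gt1 shift.
have [mu mu_gt0 [Mx Mx_ge0 r_bd]] := norm_r_bounds.
have [L hL] := pow_unbounded (Mx / mu) rho_gt1.
have bound m z : (0 < m)%N -> (nwalks r predT m 1 z <= L * m * B ^ m)%N.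
  move=> m_gt0; case: (posnP (nwalks r predT m 1 z)) => [-> //|pos].
  have := iter_shift_le (shift m) (L * m) z.
  by rewrite (nwalks_shift_vanish mu_gt0 Mx_ge0 r_bd hL m_gt0 pos).
have [m m_gt0 hm] := exp_gt_poly_exp L B_lt.
have [V V_size V_mass] := nwalks_total r m.
have : (n ^ m <= m.+1 ^ n * (L * m * B ^ m))%N.
  rewrite -V_mass; apply: leq_trans (leq_mul V_size (leqnn _)).
  apply: (@leq_trans (\sum_(y <- V) (L * m * B ^ m))).
    by apply: leq_sum => y _; apply: bound.
  by rewrite big_const_seq count_predT iter_addn_0 mulnC.
by rewrite leqNgt hm.
Qed.

Lemma nwalks_dominated_norm (B : nat) (x1 x2 : rat) : (B < n)%N ->
  x1 != 0 -> x2 != 0 ->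
  (forall m y, nwalks r predT m x1 y <= nwalks r predT m x2 y + B ^ m)%N ->
  `|x1| <= `|x2|.
Proof.
move=> B_lt x1_neq0 x2_neq0 dom; rewrite leNgt; apply/negP => lt21.
apply: (nwalks_shift_bounded B_lt (rho := x1 / x2)).
  by rewrite normrM normfV ltr_pdivlMr ?normr_gt0 // mul1r.
move=> m z; have := dom m (x1 * z).
have -> : nwalks r predT m x1 (x1 * z) = nwalks r predT m 1 z.
  by rewrite -(nwalksZ r predT m 1 z x1_neq0) mulr1.
have -> // : nwalks r predT m x2 (x1 * z) = nwalks r predT m 1 (z * (x1 / x2)).
by rewrite -(nwalksZ r predT m 1 _ x2_neq0) mulr1; congr nwalks; field.
Qed.

End Domination.

Section PhiLine.
Variables (n : nat) (r : 'I_n -> rat) (R : M -> M -> Prop) (phi : M -> M)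
  (a : M) (s : {perm 'I_n}).
Hypotheses (n_gt0 : (0 < n)%N) (r_inj : injective r)
  (r_neq0 : forall k, r k != 0) (r_neq1 : forall k, r k != 1)
  (R_spec : forall x y, x <> zeroM -> (R x y <-> exists k, y = scaleM (r k) x))
  (phi_bij : bijective phi) (phi_R : forall x y, R x y <-> R (phi x) (phi y))
  (a_neq0 : a <> zeroM)
  (phi_scale_a : forall k, phi (scaleM (r k) a) = scaleM (r (s k)) (phi a)).

Let phi_inj : injective phi := bij_inj phi_bij.

Lemma phi_a_neq0 : phi a <> zeroM.
Proof.
move=> phi_a0; pose k := Ordinal n_gt0; have := phi_scale_a k.
rewrite phi_a0 scaleM0 -phi_a0 => /phi_inj.
by rewrite -{2}[a]scale1M => /(scaleMIr a_neq0) /eqP; rewrite (negPf (r_neq1 k)).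
Qed.

Definition on_line x :=
  x != 0 /\ exists2 y, y != 0 & phi (scaleM x a) = scaleM y (phi a).

(* Off the line of [phi a] this is an arbitrary value; it is only used on
   [on_line] points. *)
Definition line_coef x :=
  epsilon (inhabits 0) (fun y => phi (scaleM x a) = scaleM y (phi a)).

Lemma line_coefP x : on_line x -> phi (scaleM x a) = scaleM (line_coef x) (phi a).
Proof.
case=> _ [y _ hy].
by apply: (epsilon_spec (inhabits 0) (fun y => _ = scaleM y _)); exists y.
Qed.

Lemma line_coef_neq0 x : on_line x -> line_coef x != 0.
Proof.
move=> lx; have [_ [y y_neq0 hy]] := lx.
by move: hy; rewrite line_coefP // => /(scaleMIr phi_a_neq0) ->.
Qed.

Lemma line_coef_inj x x' : on_line x -> on_line x' ->
  line_coef x = line_coef x' -> x = x'.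
Proof.
move=> lx lx' eq_coef; apply: (scaleMIr a_neq0); apply: phi_inj.
by rewrite !line_coefP // eq_coef.
Qed.

Lemma phi_line_neq0 x : on_line x -> phi (scaleM x a) <> zeroM.
Proof.
move=> lx; rewrite line_coefP //.
exact: scaleM_neq0 (line_coef_neq0 lx) phi_a_neq0.
Qed.

Lemma phi_line_mulr k x : on_line x ->
  exists l, phi (scaleM (r k * x) a) = scaleM (r l * line_coef x) (phi a).
Proof.
move=> lx; have xa_neq0 := scaleM_neq0 lx.1 a_neq0.
have /phi_R : R (scaleM x a) (scaleM (r k) (scaleM x a)).
  by apply/(R_spec _ xa_neq0); exists k.
case/(R_spec _ (phi_line_neq0 lx)) => l hl; exists l.
by rewrite -!scaleMA -line_coefP.
Qed.

Lemma on_line_mulr k x : on_line x -> on_line (r k * x).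
Proof.
move=> lx; have [l hl] := phi_line_mulr k lx.
split; first by rewrite mulf_neq0 ?lx.1.
by exists (r l * line_coef x); rewrite // mulf_neq0 ?line_coef_neq0.
Qed.

Lemma line_coef_mulr k x : on_line x ->
  exists l, line_coef (r k * x) = r l * line_coef x.
Proof.
move=> lx; have [l hl] := phi_line_mulr k lx; exists l.
by apply: (scaleMIr phi_a_neq0); rewrite -line_coefP //; apply: on_line_mulr.
Qed.

Lemma line_coef_mulr_surj l x : on_line x ->
  exists k, line_coef (r k * x) = r l * line_coef x.
Proof.
move=> lx; have [psi phiK psiK] := phi_bij.
have R_xa : R (scaleM x a) (psi (scaleM (r l) (phi (scaleM x a)))).
  by apply/phi_R; rewrite psiK; apply/(R_spec _ (phi_line_neq0 lx)); exists l.
have [k hk] := (R_spec _ (scaleM_neq0 lx.1 a_neq0)).1 R_xa; exists k.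
apply: (scaleMIr phi_a_neq0); rewrite -line_coefP; last exact: on_line_mulr.
by rewrite -scaleMA -hk psiK line_coefP // scaleMA.
Qed.

Lemma on_line_r k : on_line (r k).
Proof. by split; last exists (r (s k)). Qed.

Lemma line_coef_r k : line_coef (r k) = r (s k).
Proof.
apply: (scaleMIr phi_a_neq0); rewrite -line_coefP; last exact: on_line_r.
exact: phi_scale_a.
Qed.

Lemma nwalks_phi_le (C : nat -> nat) i j :
  (forall m y, nwalks r predT m (r i) y <= nwalks r predT m (r j) y + C m)%N ->
  forall m y, (nwalks r predT m (r (s i)) y <= nwalks r predT m (r (s j)) y + C m)%N.
Proof.
rewrite -!line_coef_r; apply: nwalks_transport_le (on_line_r i) (on_line_r j).
- exact: r_inj.
- by move=> x [].
- exact: on_line_mulr.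
- exact: line_coef_inj.
- exact: line_coef_mulr.
- exact: line_coef_mulr_surj.
Qed.

End PhiLine.

Theorem mainTheorem5 (n : nat) (hn : (0 < n)%N) (r : 'I_n -> rat)
  (r_inj : injective r) (r_n0 : forall i, r i != 0) (r_n1 : forall i, r i != 1)
  (R : M -> M -> Prop) (R_def : definable2 R)
  (R_spec : forall x y : M, x <> zeroM -> (R x y <-> exists i, y = scaleM (r i) x))
  (phi : M -> M) (phi_bij : bijective phi)
  (phi_R : forall a b : M, R a b <-> R (phi a) (phi b))
  (a : M) (ha : a <> zeroM) (s : {perm 'I_n})
  (hs : forall i, phi (scaleM (r i) a) = scaleM (r (s i)) (phi a))
  (i j : 'I_n) :
  `|r i| = `|r j| -> `|r (s i)| = `|r (s j)|.
Proof.
case: (eqVneq i j) => [<- //|neq_ij] /eqP.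
rewrite eqr_norm2 => /orP [/eqP /r_inj eq_ij|/eqP r_ij].
  by rewrite eq_ij eqxx in neq_ij.
have r_ji : r j = - r i by rewrite r_ij opprK.
have neq_ji : j != i by rewrite eq_sym.
have B_lt : (n - 2 < n)%N by rewrite ltn_subrL hn.
have transport := nwalks_phi_le hn r_inj r_n0 r_n1 R_spec phi_bij phi_R ha hs.
apply/eqP; rewrite eq_le; apply/andP; split.
  apply: (nwalks_dominated_norm r_n0 B_lt) => //.
  exact: transport (nwalks_opp_le neq_ij r_ji).
apply: (nwalks_dominated_norm r_n0 B_lt) => //.
exact: transport (nwalks_opp_le neq_ji r_ij).
Qed.
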